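(* Let $\mathfrak{g}$ be a Lie algebra over a field $\mathbb{K}$ and let $\mathfrak{q},\mathfrak{w}$ be Lie subalgebras of $\mathfrak{g}$. Then $$\mathfrak{q}_{\{\mathfrak{w}\}}:=\{Z\in\mathfrak{q}+\mathfrak{w}\mid \mathrm{ad}(\mathfrak{q})^{h}(Z)\subseteq\mathfrak{q}+\mathfrak{w}\ \text{for all } h\ge 0\}$$ is the largest Lie subalgebra $\mathfrak{q}'$ of $\mathfrak{g}$ with $\mathfrak{q}\subseteq\mathfrak{q}'\subseteq\mathfrak{q}+\mathfrak{w}$. In particular, if $\mathfrak{g}$ is a complex Lie algebra, $\sigma$ an anti-$\mathbb{C}$-linear involution of $\mathfrak{g}$ and $\mathfrak{q}$ a complex Lie subalgebra, then $\mathfrak{q}_{\{\sigma(\mathfrak{q})\}}$ is the maximal complex Lie subalgebra $\mathfrak{q}'$ of $\mathfrak{g}$ with $\mathfrak{q}\subseteq\mathfrak{q}'\subseteq\mathfrak{q}+\sigma(\mathfrak{q})$.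
   Context: Here $\mathrm{ad}(\mathfrak{q})^{h}(Z)$ denotes the set of all iterated brackets $[Y_h,[\dots,[Y_1,Z]\dots]]$ with $Y_1,\dots,Y_h\in\mathfrak{q}$ (for $h=0$ it is $\{Z\}$). *)

From HB Require Import structures.
From mathcomp Require Import all_boot all_order all_algebra.
From mathcomp Require Import complex.
From mathcomp Require Import reals.
Set Implicit Arguments. Unset Strict Implicit. Unset Printing Implicit Defensive.
Import Order.TTheory GRing.Theory Num.Theory.
Local Open Scope ring_scope.

Definition is_lie_bracket (K : fieldType) (V : lmodType K) (br : V -> V -> V) : Prop :=
  [/\ (forall (a : K) (x y z : V), br (a *: x + y) z = a *: br x z + br y z),
      (forall (a : K) (x y z : V), br x (a *: y + z) = a *: br x y + br x z),
      (forall x : V, br x x = 0)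
    & (forall x y z : V, br x (br y z) + br y (br z x) + br z (br x y) = 0)].

Definition subset_of (V : Type) (A B : V -> Prop) : Prop := forall x, A x -> B x.

Definition is_lie_subalgebra (K : fieldType) (V : lmodType K) (br : V -> V -> V)
    (S : V -> Prop) : Prop :=
  [/\ S 0,
      (forall x y, S x -> S y -> S (x + y)),
      (forall (a : K) x, S x -> S (a *: x))
    & (forall x y, S x -> S y -> S (br x y))].

Definition sum_set (V : zmodType) (q w : V -> Prop) : V -> Prop :=
  fun z => exists x y, [/\ q x, w y & z = x + y].

Fixpoint ad_iter (V : Type) (br : V -> V -> V) (q : V -> Prop) (h : nat) (Z : V)
    : V -> Prop :=
  match h with
  | 0 => fun X => X = Z
  | h'.+1 => fun X => exists Y W, [/\ q Y, ad_iter br q h' Z W & X = br Y W]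
  end.

Definition q_sub (V : zmodType) (br : V -> V -> V) (q w : V -> Prop) : V -> Prop :=
  fun Z => sum_set q w Z /\
           forall (h : nat), subset_of (ad_iter br q h Z) (sum_set q w).

Definition largest_between (K : fieldType) (V : lmodType K) (br : V -> V -> V)
    (q w S : V -> Prop) : Prop :=
  [/\ is_lie_subalgebra br S, subset_of q S, subset_of S (sum_set q w)
    & forall q' : V -> Prop, is_lie_subalgebra br q' -> subset_of q q' ->
        subset_of q' (sum_set q w) -> subset_of q' S].

Definition image_set (V : Type) (f : V -> V) (A : V -> Prop) : V -> Prop :=
  fun y => exists x, A x /\ y = f x.

From HB Require Import structures.
From mathcomp Require Import all_boot all_order all_algebra.
From mathcomp Require Import complex.
From mathcomp Require Import reals.
Import Order.TTheory GRing.Theory Num.Theory.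
Local Open Scope ring_scope.
Set Implicit Arguments. Unset Strict Implicit.

(* The set S = q_{w} is a subspace of q + w containing q and stable under
   ad(q); every such subspace lies in S, which gives maximality.  Since q is
   contained in S, one has S = q + (S ∩ w), so closure under the bracket
   reduces to [y1, y2] with y1, y2 in S ∩ w.  Such a bracket lies in w, and
   ad(q)^h [y1, y2] stays in q + w by induction on h: by Jacobi,
   [x, [y1, y2]] = [[x, y1], y2] + [y1, [x, y2]], and splitting
   [x, y1] = a + b with a in q and b in S ∩ w, the term [a, y2] lies in S by
   ad(q)-stability while [b, y2] is again of the inductive form.  For the
   complex case, sigma(q) is a complex subalgebra because sigma is an
   anti-linear bracket morphism. *)

Section LieBracket.
Variables (K : fieldType) (V : lmodType K) (br : V -> V -> V).
Hypothesis lie_br : is_lie_bracket br.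

Lemma lie_brDl x y z : br (x + y) z = br x z + br y z.
Proof. by have [brl _ _ _] := lie_br; rewrite -[x]scale1r brl !scale1r. Qed.

Lemma lie_brDr x y z : br x (y + z) = br x y + br x z.
Proof. by have [_ brr _ _] := lie_br; rewrite -[y]scale1r brr !scale1r. Qed.

Lemma lie_br0r x : br x 0 = 0.
Proof. by apply/(addrI (br x 0)); rewrite -lie_brDr !addr0. Qed.

Lemma lie_brZr a x z : br x (a *: z) = a *: br x z.
Proof. by have [_ brr _ _] := lie_br; rewrite -[a *: z]addr0 brr lie_br0r addr0. Qed.

Lemma lie_brC x y : br x y = - br y x.
Proof.
have [_ _ alt _] := lie_br; apply/eqP; rewrite -addr_eq0.
by have := alt (x + y); rewrite lie_brDl !lie_brDr !alt add0r addr0 => ->.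
Qed.

Lemma lie_brNr x y : br x (- y) = - br x y.
Proof. by rewrite -scaleN1r lie_brZr scaleN1r. Qed.

Lemma lie_br_derivation x y z : br x (br y z) = br (br x y) z + br y (br x z).
Proof.
have [_ _ _ jacobi] := lie_br.
rewrite (lie_brC (br x y)) (lie_brC x z) lie_brNr -opprD; apply/eqP.
by rewrite -addr_eq0 (addrC (br z _)) addrA jacobi.
Qed.

Section AdIter.
Variable q : V -> Prop.

Lemma ad_iterSr h Z X :
  ad_iter br q h.+1 Z X <-> exists Y, q Y /\ ad_iter br q h (br Y Z) X.
Proof.
elim: h X => [|h IH] X /=.
  split=> [[Y [_ [qY -> ->]]]|[Y [qY ->]]]; first by exists Y.
  by exists Y, Z.
split=> [[Y [W [qY /IH [Y' [qY' hW]] ->]]]|[Y' [qY' [Y [W [qY hW ->]]]]]].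
  by exists Y'; split=> //; exists Y, W.
by exists Y, W; split=> //; apply/IH; exists Y'.
Qed.

Lemma ad_iterZD h a Z1 Z2 X : ad_iter br q h (a *: Z1 + Z2) X ->
  exists X1 X2, [/\ ad_iter br q h Z1 X1, ad_iter br q h Z2 X2 & X = a *: X1 + X2].
Proof.
elim: h X => [|h IH] X /=; first by move=> ->; exists Z1, Z2.
move=> [Y [W [qY /IH [X1 [X2 [hX1 hX2 ->]]] ->]]].
exists (br Y X1), (br Y X2); split; [by exists Y, X1 | by exists Y, X2 |].
by rewrite lie_brDr lie_brZr.
Qed.

Lemma ad_iterD h Z1 Z2 X : ad_iter br q h (Z1 + Z2) X ->
  exists X1 X2, [/\ ad_iter br q h Z1 X1, ad_iter br q h Z2 X2 & X = X1 + X2].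
Proof.
rewrite -{1}[Z1]scale1r => /ad_iterZD [X1 [X2 [hX1 hX2 ->]]].
by exists X1, X2; rewrite scale1r.
Qed.

End AdIter.

Section QSub.
Variables q w : V -> Prop.
Hypotheses (subalg_q : is_lie_subalgebra br q) (subalg_w : is_lie_subalgebra br w).

Let S := q_sub br q w.

Lemma sum_setZD a u v :
  sum_set q w u -> sum_set q w v -> sum_set q w (a *: u + v).
Proof.
have [_ qD qZ _] := subalg_q; have [_ wD wZ _] := subalg_w.
move=> [x1 [y1 [qx1 wy1 ->]]] [x2 [y2 [qx2 wy2 ->]]].
exists (a *: x1 + x2), (a *: y1 + y2); split; [exact/qD/qx2/qZ | exact/wD/wy2/wZ |].
by rewrite scalerDr -!addrA; congr (_ + _); rewrite addrCA.
Qed.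

Lemma sum_setD u v : sum_set q w u -> sum_set q w v -> sum_set q w (u + v).
Proof. by move=> qwu qwv; rewrite -[u]scale1r; apply: sum_setZD. Qed.

Lemma sum_set_l x : q x -> sum_set q w x.
Proof. by have [w0 _ _ _] := subalg_w; exists x, 0; rewrite addr0. Qed.

Lemma sub_q_sub (P : V -> Prop) : subset_of P (sum_set q w) ->
  (forall x v, q x -> P v -> P (br x v)) -> subset_of P S.
Proof.
move=> sPqw Pad Z PZ; split=> [|h X hX]; first exact: sPqw.
apply: sPqw; elim: h X hX => [|h IH] X /=; first by move=> ->.
by move=> [Y [W [qY /IH PW ->]]]; apply: Pad.
Qed.

Lemma q_subZD a u v : S u -> S v -> S (a *: u + v).
Proof.
move=> [qwu adu] [qwv adv]; split; first exact: sum_setZD.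
move=> h X /ad_iterZD [X1 [X2 [hX1 hX2 ->]]].
by apply: sum_setZD; [apply: adu hX1 | apply: adv hX2].
Qed.

Lemma q_subD u v : S u -> S v -> S (u + v).
Proof. by move=> Su Sv; rewrite -[u]scale1r; apply: q_subZD. Qed.

Lemma q_sub_ad x Z : q x -> S Z -> S (br x Z).
Proof.
move=> qx [_ adZ]; split=> [|h X hX]; first by apply: (adZ 1); exists x, Z.
by apply: (adZ h.+1); apply/ad_iterSr; exists x.
Qed.

Lemma subset_q_sub : subset_of q S.
Proof. by have [_ _ _ qbr] := subalg_q; apply: sub_q_sub => //; apply: sum_set_l. Qed.

Lemma q_sub0 : S 0.
Proof. by have [q0 _ _ _] := subalg_q; apply: subset_q_sub. Qed.

Lemma q_subZ a u : S u -> S (a *: u).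
Proof. by move=> Su; rewrite -[a *: u]addr0; apply: q_subZD Su q_sub0. Qed.

Lemma q_subN u : S u -> S (- u).
Proof. by rewrite -scaleN1r; apply: q_subZ. Qed.

Lemma q_sub_decomp Z : S Z -> exists a b, [/\ q a, w b, S b & Z = a + b].
Proof.
move=> SZ; have [[a [b [qa wb eZ]]] _] := SZ; exists a, b; split=> //.
have -> : b = Z - a by rewrite eZ addrC addKr.
exact/q_subD/q_subN/subset_q_sub.
Qed.

Lemma ad_iter_br_in_sum h y1 y2 : w y1 -> S y1 -> w y2 -> S y2 ->
  subset_of (ad_iter br q h (br y1 y2)) (sum_set q w).
Proof.
elim: h y1 y2 => [|h IH] y1 y2 wy1 Sy1 wy2 Sy2 X.
  have [q0 _ _ _] := subalg_q; have [_ _ _ wbr] := subalg_w; move=> /= ->.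
  by exists 0, (br y1 y2); rewrite add0r; split=> //; apply: wbr.
move=> /ad_iterSr [x [qx]]; rewrite lie_br_derivation.
have [a [b [qa wb Sb ->]]] := q_sub_decomp (q_sub_ad qx Sy1).
have [a' [b' [qa' wb' Sb' ->]]] := q_sub_decomp (q_sub_ad qx Sy2).
rewrite lie_brDl lie_brDr (lie_brC y1 a').
move=> /ad_iterD [X1 [X2 [/ad_iterD [X3 [X4 [hX3 hX4 ->]]]
                          /ad_iterD [X5 [X6 [hX5 hX6 ->]]] ->]]].
apply: sum_setD; apply: sum_setD.
- by have [_ adS] := q_sub_ad qa Sy2; apply: adS hX3.
- exact: IH wb Sb wy2 Sy2 _ hX4.
- by have [_ adS] := q_subN (q_sub_ad qa' Sy1); apply: adS hX5.
- exact: IH wy1 Sy1 wb' Sb' _ hX6.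
Qed.

Lemma q_sub_br_w y1 y2 : w y1 -> S y1 -> w y2 -> S y2 -> S (br y1 y2).
Proof.
move=> wy1 Sy1 wy2 Sy2; split=> [|h]; last exact: ad_iter_br_in_sum.
exact: (ad_iter_br_in_sum (h := 0) wy1 Sy1 wy2 Sy2 (erefl _)).
Qed.

Lemma q_sub_br Z1 Z2 : S Z1 -> S Z2 -> S (br Z1 Z2).
Proof.
move=> /q_sub_decomp [x1 [y1 [qx1 wy1 Sy1 ->]]].
move=> /q_sub_decomp [x2 [y2 [qx2 wy2 Sy2 ->]]].
rewrite lie_brDl (lie_brDr y1) (lie_brC y1 x2).
apply: q_subD; [|apply: q_subD].
- exact: q_sub_ad qx1 (q_subD (subset_q_sub qx2) Sy2).
- exact: q_subN (q_sub_ad qx2 Sy1).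
- exact: q_sub_br_w.
Qed.

Lemma q_sub_largest : largest_between br q w S.
Proof.
split; [split | exact: subset_q_sub | by move=> Z [] |].
- exact: q_sub0.
- exact: q_subD.
- exact: q_subZ.
- exact: q_sub_br.
move=> q' [_ _ _ q'br] sqq' sq'qw; apply: sub_q_sub => // x v qx q'v.
exact/q'br/q'v/sqq'.
Qed.

End QSub.

Lemma image_semilinear_subalgebra (c : K -> K) (sigma : V -> V) (q : V -> Prop) :
  cancel c c ->
  (forall x y, sigma (x + y) = sigma x + sigma y) ->
  (forall a x, sigma (a *: x) = c a *: sigma x) ->
  (forall x y, sigma (br x y) = br (sigma x) (sigma y)) ->
  is_lie_subalgebra br q -> is_lie_subalgebra br (image_set sigma q).
Proof.
move=> cK sigmaD sigmaZ sigma_br [q0 qD qZ qbr].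
have sigma0 : sigma 0 = 0.
  by apply/(addrI (sigma 0)); rewrite -sigmaD !addr0.
split.
- by exists 0; rewrite sigma0.
- by move=> _ _ [x [qx ->]] [y [qy ->]]; exists (x + y); rewrite sigmaD; split=> //; apply: qD.
- by move=> a _ [x [qx ->]]; exists (c a *: x); rewrite sigmaZ cK; split=> //; apply: qZ.
- by move=> _ _ [x [qx ->]] [y [qy ->]]; exists (br x y); rewrite sigma_br; split=> //; apply: qbr.
Qed.

End LieBracket.

Theorem lemma3p5 :
  (forall (K : fieldType) (V : lmodType K) (br : V -> V -> V) (q w : V -> Prop),
     is_lie_bracket br -> is_lie_subalgebra br q -> is_lie_subalgebra br w ->
     largest_between br q w (q_sub br q w))
  /\
  (forall (R : realType) (V : lmodType R[i]) (br : V -> V -> V)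
          (sigma : V -> V) (q : V -> Prop),
     is_lie_bracket br ->
     (forall x y : V, sigma (x + y) = sigma x + sigma y) ->
     (forall (a : R[i]) (x : V), sigma (a *: x) = a^* *: sigma x) ->
     (forall x y : V, sigma (br x y) = br (sigma x) (sigma y)) ->
     (forall x : V, sigma (sigma x) = x) ->
     is_lie_subalgebra br q ->
     largest_between br q (image_set sigma q) (q_sub br q (image_set sigma q))).
Proof.
split=> [K V br q w lie_br|]; first exact: q_sub_largest.
move=> R V br sigma q lie_br sigmaD sigmaZ sigma_br _ subalg_q.
have subalg_sq := image_semilinear_subalgebra (@conjCK _) sigmaD sigmaZ sigma_br subalg_q.
exact (q_sub_largest lie_br subalg_q subalg_sq).
Qed.
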